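(* If on an infinite graph $\mathcal{G}$ one has $\mu(b)\le A^{b}$ for all $b\ge\bar{b}$ (for some $\bar b$ and some constant $A>0$), then the ferromagnetic Ising model on $\mathcal{G}$ exhibits spontaneous magnetization at large enough $\beta$ (low enough temperature), i.e. $\langle |M|\rangle$ is bounded below by a positive constant uniformly in the size of the finite subgraphs.
   Context: Let $\mathcal{G}=(\mathcal{P},\mathcal{L})$ be a connected graph with countable vertex set $\mathcal{P}$ and unoriented bond set $\mathcal{L}$, whose coordination numbers are uniformly bounded ($z_i\le z_{Max}$ for all $i$). On it consider the ferromagnetic Ising model with spins $\sigma_i=\pm1$, Hamiltonian $\mathcal{H}=-\sum_{(i,j)} J_{ij}\sigma_i\sigma_j$ (zero external field), with couplings $J_{ij}=J_{ji}$, $0\le J_{ij}<J_{Max}<\infty$, $J_{ij}>0$ iff $(i,j)\in\mathcal{L}$, and $J_{min}>0$ the minimal coupling on bonds. The quantity studied is the modulus of the magnetization $\langle |M|\rangle=\mathcal{Z}^{-1}\sum_{\{\sigma\}}\frac{|\sum_j\sigma_j|}{|\mathcal{P}|}e^{-\beta\mathcal{H}}$, computed on finite subgraphs $\mathcal{G}_N$ of $\mathcal{G}$ and taken in the limit $N\to\infty$. A border is a set of bonds separating the graph into exactly two connected subgraphs (every path from one part to the other uses a bond of the set, and each part is connected without using bonds of the set). For a finite subgraph with external points $\mathcal{E}$ (vertices having a bond to the outside), a border is closed if one of the two parts contains no external point, open otherwise; a vertex $p$ is ''inside'' a border if it lies in the internal part (for closed borders, the part not meeting $\mathcal{E}$;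 for open borders, the smaller part, ties broken by spin sign). $\mu^p(b)$ denotes the number of possible borders made of $b$ links that contain the vertex $p$ inside, and $\mu(b)=\sup_p\mu^p(b)$. *)

From HB Require Import structures.
From mathcomp Require Import all_boot all_order all_algebra.
From mathcomp Require Import finmap.
From mathcomp Require Import boolp reals.
From mathcomp Require Import sequences.
Set Implicit Arguments. Unset Strict Implicit. Unset Printing Implicit Defensive.
Import Order.TTheory GRing.Theory Num.Theory.
Local Open Scope ring_scope.
Local Open Scope fset_scope.

Section Graph.
Variable V : choiceType.
Variable adj : rel V.

Definition graph_connected : Prop :=
  forall x y : V, exists s : seq V, path adj x s && (last x s == y).

Definition induced_connected (S : {fset V}) : Prop :=
  forall x y : S, connect (fun a b : S => adj (val a) (val b)) x y.

Definition external (S : {fset V}) (v : S) : bool :=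
  `[< exists w : V, w \notin S /\ adj (val v) w >].

Definition adjIn (S : {fset V}) (P : {set S}) : rel S :=
  fun x y => [&& x \in P, y \in P & adj (val x) (val y)].

Definition connected_part (S : {fset V}) (P : {set S}) : bool :=
  [forall x in P, forall y in P, connect (adjIn P) x y].

(* the set of bonds of S joining P to its complement in S (each unordered bond
   recorded once, oriented from P outwards) *)
Definition cut (S : {fset V}) (P : {set S}) : {set S * S} :=
  [set e : S * S | [&& e.1 \in P, e.2 \notin P & adj (val e.1) (val e.2)]].

(* cut P is a border: it separates S into exactly the two connected parts
   P and S \ P, both nonempty *)
Definition border_part (S : {fset V}) (P : {set S}) : bool :=
  [&& P != set0, ~: P != set0, connected_part P & connected_part (~: P)].

Definition closed_part (S : {fset V}) (P : {set S}) : bool :=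
  [forall x in P, ~~ external x].

(* P is (possibly) the internal part of the border cut P and contains p:
   - closed border: P is the part with no external point;
   - open border (both parts meet the external points): P is the smaller part,
     ties (which the paper breaks by spin sign) counted as possibly inside. *)
Definition inside_part (S : {fset V}) (p : S) (P : {set S}) : bool :=
  [&& border_part P, p \in P &
      closed_part P ||
      [&& ~~ closed_part P, ~~ closed_part (~: P) & (#|P| <= #|~: P|)%N]].

(* mu^p(b) on the finite subgraph S: number of possible borders made of b
   links containing p inside (a border is determined by its internal part) *)
Definition mu_p (S : {fset V}) (p : S) (b : nat) : nat :=
  #|[set P : {set S} | inside_part p P && (#|cut P| == b)]|.

End Graph.

Section Ising.
Variable R : realType.
Variable V : choiceType.
Variable J : V -> V -> R.

Definition spin (S : {fset V}) (sigma : {ffun S -> bool}) (x : S) : R :=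
  if sigma x then 1 else -1.

(* H = - sum over unordered bonds (i,j) of J_ij s_i s_j  (= half the sum over
   ordered pairs, since J is symmetric and J_ii = 0) *)
Definition hamiltonian (S : {fset V}) (sigma : {ffun S -> bool}) : R :=
  - (2^-1 * \sum_(i : S) \sum_(j : S)
        J (val i) (val j) * spin sigma i * spin sigma j).

Definition boltz (beta : R) (S : {fset V}) (sigma : {ffun S -> bool}) : R :=
  expR (- (beta * hamiltonian sigma)).

Definition partition_fn (beta : R) (S : {fset V}) : R :=
  \sum_(sigma : {ffun S -> bool}) boltz beta sigma.

(* <|M|> on the finite subgraph S, free boundary conditions *)
Definition avg_absM (beta : R) (S : {fset V}) : R :=
  (\sum_(sigma : {ffun S -> bool})
      (`| \sum_(j : S) spin sigma j | / (#|{: S}|)%:R) * boltz beta sigma)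
  / partition_fn beta S.

End Ising.

From Pilot Require Import Defs.
From HB Require Import structures.
From mathcomp Require Import all_boot all_order all_algebra.
From mathcomp Require Import finmap.
From mathcomp Require Import boolp reals.
From mathcomp Require Import sequences exp ring lra.
Set Implicit Arguments. Unset Strict Implicit. Unset Printing Implicit Defensive.
Import Order.TTheory GRing.Theory Num.Theory.
Local Open Scope fset_scope.
Local Open Scope ring_scope.

(* Peierls' argument.  If two sites p, q of a connected finite subgraph S
   carry opposite spins, let C be the same-spin cluster of p and D the
   component of q in S \ C.  Both D and S \ D are connected, every bond of the
   border cut D joins opposite spins, and p or q lies inside it.  Hence the
   sites lying inside no such unsatisfied border all carry the same spin, and
   |M| is at least 1 - 2 (fraction of sites inside an unsatisfied border).
   Flipping the spins of the internal part P of a border is injective and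
   multiplies the Boltzmann weight of a configuration not satisfying it by at
   least exp (beta Jmin |cut P|).  So P is unsatisfied with probability at most
   x^|cut P|, x = exp (- beta Jmin), and the expected fraction of sites inside
   an unsatisfied border is at most sup_p sum_b mu^p(b) x^b, which is small at
   large beta once mu(b) <= K (A + 1)^b. *)

Lemma connect_closed (T : finType) (e : rel T) (D : pred T) :
  (forall a b, D a -> e a b -> D b) -> forall x y, D x -> connect e x y -> D y.
Proof.
move=> cl x y Dx /connectP [s pth ->].
elim: s x Dx pth => //= z s IH x Dx /andP[exz pth].
exact: IH (cl _ _ Dx exz) pth.
Qed.

Lemma connect_restrict (T : finType) (e : rel T) (D : pred T) :
  (forall a b, D a -> e a b -> D b) -> forall x y, D x -> connect e x y ->
  connect (fun a b => [&& D a, D b & e a b]) x y.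
Proof.
move=> cl x y Dx /connectP [s pth ->].
elim: s x Dx pth => [|z s IH] x Dx /=; first by rewrite connect0.
case/andP=> exz pth; have Dz := cl _ _ Dx exz.
by apply: connect_trans (connect1 _) (IH z Dz pth); rewrite Dx Dz exz.
Qed.

Section Borders.
Variable V : choiceType.
Variable adj : rel V.
Hypothesis adj_sym : forall i j, adj i j = adj j i.
Variable S : {fset V}.

Definition unsatisfied (sigma : {ffun S -> bool}) (P : {set S}) : bool :=
  [forall e in Defs.cut adj P, sigma e.1 != sigma e.2].

Lemma adjIn_sym (P : {set S}) : symmetric (adjIn adj P).
Proof. by move=> x y; rewrite /adjIn adj_sym; case: (x \in P); case: (y \in P). Qed.

Hypothesis S_connected : induced_connected adj S.

Lemma exists_crossing_bond (P : {set S}) : P != set0 -> ~: P != set0 ->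
  exists x y, [/\ x \in P, y \notin P & adj (val x) (val y)].
Proof.
case/set0Pn=> x0 Px0; case/set0Pn=> y0; rewrite inE => Py0.
case: (pickP [pred xy : S * S | [&& xy.1 \in P, xy.2 \notin P & adj (val xy.1) (val xy.2)]]).
  by move=> [x y] /= /and3P[]; exists x, y.
move=> none; exfalso; move/negP: Py0; apply.
apply: (connect_closed (D := fun a => a \in P)) (S_connected x0 y0) => //.
move=> a b Pa ab; apply/negPn/negP=> nPb.
by have := none (a, b); rewrite /= Pa nPb ab.
Qed.

Lemma card_cut_gt0 (P : {set S}) : border_part adj P -> (0 < #|Defs.cut adj P|)%N.
Proof.
case/and4P=> P0 P1 _ _; have [x [y [Px Py a]]] := exists_crossing_bond P0 P1.
by apply/card_gt0P; exists (x, y); rewrite inE /= Px Py a.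
Qed.

Lemma mu_p0 (p : S) : mu_p adj p 0 = 0%N.
Proof.
apply/eqP; rewrite cards_eq0; apply/eqP/setP => P; rewrite !inE.
apply/negbTE/andP => -[/and3P[border_P _ _] /eqP cut0].
by have := card_cut_gt0 border_P; rewrite cut0.
Qed.

Section OppositeSpins.
Variable sigma : {ffun S -> bool}.
Variables p q : S.
Hypothesis spin_pq : sigma p != sigma q.

Let same_spin : rel S := fun a b => adj (val a) (val b) && (sigma a == sigma b).
Let C : {set S} := [set y | connect same_spin p y].
Let D : {set S} := [set y | connect (adjIn adj (~: C)) q y].

Let C_closed a b : a \in C -> same_spin a b -> b \in C.
Proof. by rewrite !inE => Ca ab; apply: connect_trans Ca (connect1 ab). Qed.

Let spin_C y : y \in C -> sigma y = sigma p.
Proof.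
rewrite inE => Cy; apply/eqP.
apply: (connect_closed (D := fun a => sigma a == sigma p)) Cy => //.
by move=> a b /eqP <- /andP[_ /eqP ->].
Qed.

Let D_notC y : y \in D -> y \notin C.
Proof.
rewrite inE => Dy; have qnC : q \in ~: C.
  by rewrite inE; apply/negP => /spin_C e; move: spin_pq; rewrite e eqxx.
by rewrite -in_setC; apply: (connect_closed _ qnC Dy) => a b _ /and3P[].
Qed.

Let D_closed a b : a \in D -> adjIn adj (~: C) a b -> b \in D.
Proof. by rewrite !inE => Da ab; apply: connect_trans Da (connect1 ab). Qed.

Let bond_out_of_D x y : x \in D -> y \notin D -> adj (val x) (val y) ->
  y \in C /\ sigma x != sigma y.
Proof.
move=> Dx nDy xy; have nCx := D_notC Dx.
have Cy : y \in C.
  apply/negPn/negP => nCy; move/negP: nDy; apply.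
  by apply: (D_closed Dx); rewrite /adjIn !in_setC nCx nCy xy.
split=> //; apply/negP => /eqP exy; move/negP: nCx; apply.
by apply: (C_closed Cy); rewrite /same_spin adj_sym xy exy eqxx.
Qed.

Let unsatisfied_D : unsatisfied sigma D.
Proof.
apply/forall_inP => [[x y]]; rewrite inE /= => /and3P[Dx nDy xy].
by case: (bond_out_of_D Dx nDy xy).
Qed.

Let unsatisfied_notD : unsatisfied sigma (~: D).
Proof.
apply/forall_inP => [[x y]]; rewrite inE /= !in_setC negbK => /and3P[nDx Dy xy].
by rewrite adj_sym in xy; case: (bond_out_of_D Dy nDx xy) => _; rewrite eq_sym.
Qed.

Let q_D : q \in D.
Proof. by rewrite inE connect0. Qed.

Let p_notD : p \notin D.
Proof. by apply/negP => /D_notC; rewrite inE connect0. Qed.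

Let C_notD y : y \in C -> y \in ~: D.
Proof. by move=> Cy; rewrite inE; apply/negP => /D_notC; rewrite Cy. Qed.

Let connected_D : connected_part adj D.
Proof.
have from_q y : y \in D -> connect (adjIn adj D) q y.
  rewrite {2}/D inE => Dy.
  apply: connect_sub (connect_restrict D_closed q_D Dy) => a b /and3P[Da Db /and3P[_ _ ab]].
  by apply: connect1; rewrite /adjIn Da Db.
apply/forall_inP => x Dx; apply/forall_inP => y Dy.
by apply: connect_trans (from_q _ Dy); rewrite (sym_connect_sym (adjIn_sym D)); apply: from_q.
Qed.

Let C_to_p u : u \in C -> connect (adjIn adj (~: D)) u p.
Proof.
move=> Cu; rewrite (sym_connect_sym (adjIn_sym _)).
have p_C : p \in C by rewrite inE connect0.
rewrite inE in Cu.
apply: connect_sub (connect_restrict C_closed p_C Cu) => a b /and3P[Ca Cb /andP[ab _]].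
by apply: connect1; rewrite /adjIn (C_notD Ca) (C_notD Cb).
Qed.

(* If some site of ~: D were not linked to p within ~: D, a bond would leave
   the set U of such sites; its far end can be neither in D (the near end would
   then be in C, which is linked to p) nor in ~: D \ U. *)
Let connected_notD : connected_part adj (~: D).
Proof.
have to_p u : u \in ~: D -> connect (adjIn adj (~: D)) u p.
  move=> nDu; apply/negPn/negP => nc.
  pose U : {set S} := [set u | (u \in ~: D) && ~~ connect (adjIn adj (~: D)) u p].
  have U0 : U != set0 by apply/set0Pn; exists u; rewrite inE nDu nc.
  have U1 : ~: U != set0 by apply/set0Pn; exists p; rewrite !inE connect0 andbF.
  have [x [y [Ux nUy xy]]] := exists_crossing_bond U0 U1.
  move: Ux; rewrite inE => /andP[nDx ncx].
  have [Dy|nDy] := boolP (y \in D).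
    rewrite inE in nDx; rewrite adj_sym in xy.
    by case: (bond_out_of_D Dy nDx xy) => /C_to_p; rewrite (negbTE ncx).
  rewrite -in_setC in nDy; move: nUy; rewrite inE nDy negbK => cy.
  by move/negP: ncx; apply; apply: connect_trans cy; apply: connect1; rewrite /adjIn nDx nDy xy.
apply/forall_inP => x nDx; apply/forall_inP => y nDy.
by apply: connect_trans (to_p _ nDx) _; rewrite (sym_connect_sym (adjIn_sym _)); apply: to_p.
Qed.

Lemma opposite_spins_unsatisfied_border :
  exists P, unsatisfied sigma P && (inside_part adj p P || inside_part adj q P).
Proof.
have border_D : border_part adj D.
  rewrite /border_part connected_D connected_notD !andbT.
  by apply/andP; split; apply/set0Pn; [exists q | exists p; rewrite inE].
have border_notD : border_part adj (~: D).
  rewrite /border_part connected_notD setCK connected_D !andbT.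
  by apply/andP; split; apply/set0Pn; [exists p; rewrite inE | exists q].
have [cD|ncD] := boolP (closed_part adj D).
  by exists D; rewrite unsatisfied_D /inside_part border_D q_D cD orbT.
have [cnD|ncnD] := boolP (closed_part adj (~: D)).
  by exists (~: D); rewrite unsatisfied_notD /inside_part border_notD inE p_notD cnD.
have [le|lt] := leqP #|D| #|~: D|.
  by exists D; rewrite unsatisfied_D /inside_part border_D q_D ncD ncnD le !orbT.
exists (~: D); rewrite unsatisfied_notD /inside_part border_notD inE p_notD ncnD setCK ncD.
by rewrite ltnW ?orbT.
Qed.

End OppositeSpins.

Definition unsat_interior (sigma : {ffun S -> bool}) : {set S} :=
  [set p | [exists P, unsatisfied sigma P && inside_part adj p P]].

Lemma notin_unsat_interior_same_spin (sigma : {ffun S -> bool}) j k :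
  j \notin unsat_interior sigma -> k \notin unsat_interior sigma -> sigma j = sigma k.
Proof.
move=> nj nk; apply/eqP/negP => /negP ne.
have [P /andP[u /orP[i|i]]] := opposite_spins_unsatisfied_border ne.
  by move/negP: nj; apply; rewrite inE; apply/existsP; exists P; rewrite u i.
by move/negP: nk; apply; rewrite inE; apply/existsP; exists P; rewrite u i.
Qed.

Lemma magnetization_ge (R : realType) (sigma : {ffun S -> bool}) :
  #|{: S}|%:R - 2 * #|unsat_interior sigma|%:R <= `|\sum_(j : S) spin R sigma j|.
Proof.
set B := unsat_interior sigma.
have cB : (#|B| + #|~: B| = #|{: S}|)%N by rewrite cardsC.
have [B0 | [k Bk]] := set_0Vmem (~: B).
  rewrite B0 cards0 addn0 in cB; rewrite -cB.
  by apply: le_trans (normr_ge0 _); have := ler0n R #|B|; lra.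
have normr_spin j : `|spin R sigma j| = 1.
  by rewrite /spin; case: (sigma j); rewrite ?normrN normr1.
rewrite (bigID (mem B)) /=; set a := \sum_(i in B) _; set b := \sum_(i | _) _.
have a_le : `|a| <= #|B|%:R.
  apply: le_trans (ler_norm_sum _ _ _) _.
  by rewrite (eq_bigr (fun _ => 1)) ?sumr_const // => j _; rewrite normr_spin.
have b_eq : `|b| = #|~: B|%:R.
  rewrite /b (eq_bigl (mem (~: B))); last by move=> j; rewrite /= in_setC.
  rewrite (eq_bigr (fun _ => spin R sigma k)) ?sumr_const ?normrMn ?normr_spin //.
  move=> j /=; rewrite !in_setC in Bk * => Bj.
  by rewrite /spin (notin_unsat_interior_same_spin Bj Bk).
have := ler_normB (a + b) a; rewrite addrAC subrr add0r b_eq -cB natrD.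
lra.
Qed.

End Borders.

Lemma sum_expr_le2 (R : realFieldType) (y : R) (N : nat) :
  0 <= y -> y <= 2^-1 -> \sum_(b < N) y ^+ b <= 2.
Proof.
move=> y0 yh; have := subrX1 y N; set s := \sum_(b < N) _.
have s0 : 0 <= s by apply: sumr_ge0 => b _; apply: exprn_ge0.
have : 0 <= y ^+ N by apply: exprn_ge0.
nra.
Qed.

Lemma uniform_exp_bound (R : realDomainType) (T : Type) (f : T -> nat -> nat) (A : R) bbar :
  0 < A -> (forall b, exists M, forall t, (f t b <= M)%N) ->
  (forall b, (bbar <= b)%N -> forall t, (f t b)%:R <= A ^+ b) ->
  exists K : R, 1 <= K /\ forall t b, (f t b)%:R <= K * (A + 1) ^+ b.
Proof.
move=> A0 fM fA.
have [M fM'] : exists M, forall b t, (b < bbar)%N -> (f t b <= M)%N.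
  elim: bbar {fA} => [|m [M IH]]; first by exists 0%N.
  have [Mm HMm] := fM m; exists (maxn M Mm) => b t; rewrite ltnS leq_eqVlt.
  case/orP=> [/eqP->|lt]; first exact: leq_trans (HMm t) (leq_maxr _ _).
  exact: leq_trans (IH b t lt) (leq_maxl _ _).
exists M.+1%:R; split=> [|t b]; first by rewrite ler1n.
have B1 : 1 <= (A + 1) ^+ b by apply: exprn_ege1; lra.
have [lt|ge] := ltnP b bbar.
  apply: le_trans (_ : M.+1%:R <= _); last by rewrite ler_peMr ?ler0n.
  by rewrite ler_nat (leq_trans (fM' b t lt)).
apply: le_trans (fA b ge t) _; apply: le_trans (_ : (A + 1) ^+ b <= _).
  by apply: lerXn2r; rewrite ?nnegrE; lra.
by rewrite ler_peMl ?ler1n // (le_trans ler01).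
Qed.

Lemma mul_expRN_le1 (R : realType) (c t : R) : c <= t -> c * expR (- t) <= 1.
Proof.
move=> ct; have e_gt0 := expR_gt0 (- t).
apply: le_trans (_ : expR t * expR (- t) <= 1); last by rewrite -expRD subrr expR0.
by apply: ler_wpM2r; [exact: ltW | apply: le_trans (expR_ge1Dx t); lra].
Qed.

Section Flip.
Variable R : realType.
Variable V : choiceType.
Variable adj : rel V.
Hypothesis adj_sym : forall i j, adj i j = adj j i.
Variable J : V -> V -> R.
Hypothesis J_nonadj : forall i j, ~~ adj i j -> J i j = 0.
Hypothesis J_ge0 : forall i j, 0 <= J i j.
Variable Jmin : R.
Hypothesis Jmin_le : forall i j, adj i j -> Jmin <= J i j.
Variable S : {fset V}.

Definition flip (P : {set S}) (sigma : {ffun S -> bool}) : {ffun S -> bool} :=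
  [ffun x => if x \in P then ~~ sigma x else sigma x].

Lemma flipK P : involutive (flip P).
Proof. by move=> s; apply/ffunP => x; rewrite !ffunE; case: (x \in P); rewrite ?negbK. Qed.

Definition crossJ (P : {set S}) (i j : S) : R :=
  if (i \in P) != (j \in P) then J (val i) (val j) else 0.

Lemma hamiltonian_flip P sigma : unsatisfied adj sigma P ->
  hamiltonian J (flip P sigma) = hamiltonian J sigma - \sum_i \sum_j crossJ P i j.
Proof.
move=> /forall_inP unsat.
have pair_flip i j : J (val i) (val j) * spin R (flip P sigma) i * spin R (flip P sigma) j
    = J (val i) (val j) * spin R sigma i * spin R sigma j + 2 * crossJ P i j.
  rewrite /spin /crossJ !ffunE.
  have [a|na] := boolP (adj (val i) (val j)); last first.
    by rewrite J_nonadj // !mul0r; case: ifP; rewrite mulr0 addr0.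
  case Pi: (i \in P); case Pj: (j \in P) => /=; rewrite ?mulr0 ?addr0.
  - by case: (sigma i); case: (sigma j); rewrite /= ?mulrN ?mulr1 ?opprK.
  - have := unsat (i, j); rewrite inE /= Pi Pj a => /(_ isT).
    by case: (sigma i); case: (sigma j) => //= _; rewrite ?mulrN ?mulr1 ?opprK; lra.
  - have := unsat (j, i); rewrite inE /= Pi Pj adj_sym a => /(_ isT).
    by case: (sigma i); case: (sigma j) => //= _; rewrite ?mulrN ?mulr1 ?opprK; lra.
  - by [].
rewrite /hamiltonian.
under eq_bigr => i _ do under eq_bigr => j _ do rewrite pair_flip.
under eq_bigr => i _ do rewrite big_split /=.
rewrite big_split /=.
have -> : \sum_i \sum_j 2 * crossJ P i j = 2 * \sum_i \sum_j crossJ P i j.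
  by rewrite mulr_sumr; apply: eq_bigr => i _; rewrite mulr_sumr.
lra.
Qed.

Lemma crossJ_ge P : Jmin *+ #|Defs.cut adj P| <= \sum_i \sum_j crossJ P i j.
Proof.
apply: le_trans (_ : \sum_i \sum_j (if (i, j) \in Defs.cut adj P then J (val i) (val j) else 0) <= _).
  rewrite pair_bigA /= -big_mkcond /= -sumr_const.
  rewrite [X in _ <= X](eq_bigl (mem (Defs.cut adj P))); last by case.
  by apply: ler_sum => [[i j]]; rewrite inE /= => /and3P[_ _ a]; apply: Jmin_le.
apply: ler_sum => i _; apply: ler_sum => j _.
rewrite /crossJ inE /=; case: (i \in P); case: (j \in P) => //=; rewrite ?J_ge0 //.
by case: (adj _ _).
Qed.

Lemma sum_inside_part (p : S) (z : R) :
  \sum_(P | inside_part adj p P) z ^+ #|Defs.cut adj P| =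
  \sum_(b < #|{: S * S}|.+1) (mu_p adj p b)%:R * z ^+ b.
Proof.
have cut_lt (P : {set S}) : (#|Defs.cut adj P| < #|{: S * S}|.+1)%N by rewrite ltnS max_card.
rewrite (partition_big (fun P => inord #|Defs.cut adj P| : 'I_(#|{: S * S}|.+1)) predT) //=.
apply: eq_bigr => b _.
rewrite (eq_bigl (mem [set P | inside_part adj p P && (#|Defs.cut adj P| == b)])); last first.
  move=> P; rewrite /= inE; case: (inside_part adj p P) => //=.
  by apply/eqP/eqP => [<-|->]; [rewrite inordK | rewrite inord_val].
rewrite (eq_bigr (fun _ => z ^+ b)); last by move=> P /=; rewrite inE => /andP[_ /eqP ->].
by rewrite sumr_const mulr_natl.
Qed.

Variable beta : R.
Hypothesis beta_ge0 : 0 <= beta.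
Let x := expR (- (beta * Jmin)).

Lemma boltz_flip_ge P sigma : unsatisfied adj sigma P ->
  boltz J beta sigma <= x ^+ #|Defs.cut adj P| * boltz J beta (flip P sigma).
Proof.
move=> unsat; rewrite /boltz hamiltonian_flip //.
set H := hamiltonian J sigma; set Y := \sum_i _.
have -> : - (beta * H) = - (beta * (H - Y)) + - (beta * Y) by ring.
rewrite expRD mulrC ler_wpM2r ?(ltW (expR_gt0 _)) //.
rewrite /x -expRM_natl ler_expR.
have JbY : Jmin * #|Defs.cut adj P|%:R <= Y by rewrite mulr_natr; apply: crossJ_ge.
set b := (#|_|%:R : R) in JbY *.
have : 0 <= beta * (Y - Jmin * b) by apply: mulr_ge0 => //; rewrite subr_ge0.
nra.
Qed.

Lemma unsatisfied_weight_le (P : {set S}) :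
  \sum_(sigma | unsatisfied adj sigma P) boltz J beta sigma <=
  x ^+ #|Defs.cut adj P| * partition_fn J beta S.
Proof.
apply: le_trans (ler_sum _ (fun s => @boltz_flip_ge P s)) _.
rewrite -mulr_sumr ler_wpM2l ?exprn_ge0 ?(ltW (expR_gt0 _)) //.
rewrite /partition_fn [X in _ <= X](reindex_inj (inv_inj (flipK P))) /=.
rewrite [X in _ <= X](bigID (fun s => unsatisfied adj s P)) /= lerDl.
by apply: sumr_ge0 => s _; apply: ltW; apply: expR_gt0.
Qed.

Lemma unsat_interior_weight_le :
  \sum_(sigma : {ffun S -> bool}) #|unsat_interior adj sigma|%:R * boltz J beta sigma <=
  \sum_(p : S) (\sum_(P | inside_part adj p P) x ^+ #|Defs.cut adj P|) * partition_fn J beta S.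
Proof.
rewrite (eq_bigr (fun s => \sum_p if p \in unsat_interior adj s then boltz J beta s else 0));
  last by move=> s _; rewrite -big_mkcond sumr_const mulr_natl.
rewrite exchange_big /=; apply: ler_sum => p _; rewrite mulr_suml.
apply: (@le_trans _ _ (\sum_(P | inside_part adj p P) \sum_(s | unsatisfied adj s P) boltz J beta s));
  last by apply: ler_sum => P _; apply: unsatisfied_weight_le.
under [X in _ <= X]eq_bigr => P _ do rewrite big_mkcond.
rewrite (exchange_big_dep predT) //=; apply: ler_sum => s _.
have summand_ge0 P : 0 <= if unsatisfied adj s P then boltz J beta s else 0.
  by case: ifP => // _; apply/ltW/expR_gt0.
case: ifP => [|_]; last by apply: sumr_ge0.
rewrite inE => /existsP [P /andP[unsat inside]].
by rewrite (bigD1 P) ?inside //= unsat lerDl sumr_ge0.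
Qed.

End Flip.

Lemma avg_absM_ge (R : realType) (V : choiceType) (adj : rel V) (J : V -> V -> R)
    (Jmin beta eps : R) (S : {fset V}) :
  (forall i j, adj i j = adj j i) -> (forall i j, ~~ adj i j -> J i j = 0) ->
  (forall i j, 0 <= J i j) -> (forall i j, adj i j -> Jmin <= J i j) ->
  induced_connected adj S -> S != fset0 -> 0 <= beta ->
  (forall p : S, \sum_(P | inside_part adj p P)
     expR (- (beta * Jmin)) ^+ #|Defs.cut adj P| <= eps) ->
  1 - 2 * eps <= avg_absM J beta S.
Proof.
move=> adj_sym J_nonadj J_ge0 Jmin_le S_connected S_neq0 beta_ge0 inside_le.
have w_gt0 (s : {ffun S -> bool}) : 0 < boltz J beta s by apply: expR_gt0.
set Z := partition_fn J beta S; have Z_gt0 : 0 < Z.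
  rewrite /Z /partition_fn (bigD1 [ffun=> true]) //=.
  by rewrite ltr_wpDr ?sumr_ge0 // => s _; apply: ltW.
set n := (#|{: S}|%:R : R); have n_gt0 : 0 < n.
  have /fset0Pn [v vS] := S_neq0.
  by rewrite ltr0n; apply/card_gt0P; exists [` vS].
pose E := \sum_(sigma : {ffun S -> bool}) #|unsat_interior adj sigma|%:R * boltz J beta sigma.
have E_le : E <= n * (eps * Z).
  apply: le_trans (unsat_interior_weight_le adj_sym J_nonadj J_ge0 Jmin_le S beta_ge0) _.
  apply: le_trans (_ : \sum_(p : S) eps * Z <= _); last by rewrite sumr_const mulr_natl.
  by apply: ler_sum => p _; apply: ler_wpM2r; [apply: ltW | apply: inside_le].
have mean_ge : Z - 2 / n * E <=
    \sum_(sigma : {ffun S -> bool}) `|\sum_j spin R sigma j| / n * boltz J beta sigma.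
  rewrite /E mulr_sumr /Z /partition_fn -sumrB; apply: ler_sum => s _.
  have -> : forall b w : R, w - 2 / n * (b * w) = (n - 2 * b) / n * w.
    by move=> b w; field; rewrite gt_eqF.
  apply: ler_wpM2r; first exact: ltW.
  by rewrite ler_pM2r ?invr_gt0 // magnetization_ge.
rewrite /avg_absM -/Z ler_pdivlMr //; apply: le_trans mean_ge.
have : 2 / n * E <= 2 * (eps * Z).
  apply: le_trans (_ : 2 / n * (n * (eps * Z)) <= _).
    by apply: ler_wpM2l; rewrite // divr_ge0 // ltW.
  by rewrite -mulrA mulKf ?gt_eqF.
lra.
Qed.

Lemma inside_part_sum_le (R : realType) (V : choiceType) (adj : rel V) (S : {fset V})
    (p : S) (K B x : R) :
  induced_connected adj S -> 0 <= K -> 0 <= B -> 0 <= x -> B * x <= 2^-1 ->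
  (forall b, (mu_p adj p b)%:R <= K * B ^+ b) ->
  \sum_(P | inside_part adj p P) x ^+ #|Defs.cut adj P| <= 2 * K * (B * x).
Proof.
move=> S_connected K0 B0 x0 Bx_le mu_le; set y := B * x.
have y0 : 0 <= y by rewrite mulr_ge0.
rewrite sum_inside_part big_ord_recl mu_p0 // mul0r add0r.
apply: (@le_trans _ _ (\sum_(b < #|{: S * S}|) K * y * y ^+ b)).
  apply: ler_sum => b _; rewrite (_ : lift ord0 b = b.+1 :> nat) // -mulrA -exprS /y exprMn mulrA.
  by rewrite ler_wpM2r ?exprn_ge0.
rewrite -mulr_sumr; have := sum_expr_le2 #|{: S * S}| y0 Bx_le.
have : 0 <= K * y by apply: mulr_ge0.
nra.
Qed.

Theorem theorem2 (R : realType) (V : countType) (adj : rel V)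
    (J : V -> V -> R) (Gs : nat -> {fset V}) :
  (* G: simple, connected, infinite, bounded coordination *)
  (forall i, ~~ adj i i) ->
  (forall i j, adj i j = adj j i) ->
  graph_connected adj ->
  (forall S : {fset V}, exists v, v \notin S) ->
  (exists zmax : nat, forall i, exists N : {fset V},
      (forall j, adj i j -> j \in N) /\ (#|` N| <= zmax)%N) ->
  (* ferromagnetic couplings *)
  (forall i j, J i j = J j i) ->
  (exists Jmax : R, forall i j, 0 <= J i j /\ J i j < Jmax) ->
  (forall i j, (0 < J i j) = adj i j) ->
  (exists Jmin : R, 0 < Jmin /\ forall i j, adj i j -> Jmin <= J i j) ->
  (* finite subgraphs G_N exhausting G *)
  (forall n, Gs n != fset0) ->
  (forall n, Gs n `<=` Gs n.+1) ->
  (forall v, exists n, v \in Gs n) ->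
  (forall n, induced_connected adj (Gs n)) ->
  (* mu(b) = sup_p mu^p(b) is finite for every b ... *)
  (forall b : nat, exists Mb : nat, forall n (p : Gs n), (mu_p adj p b <= Mb)%N) ->
  (* ... and mu(b) <= A^b for b >= bbar *)
  (exists A : R, 0 < A /\ exists bbar : nat, forall b : nat, (bbar <= b)%N ->
      forall n (p : Gs n), (mu_p adj p b)%:R <= A ^+ b) ->
  (* spontaneous magnetization at large beta *)
  exists beta0 : R, forall beta : R, beta0 < beta ->
    exists c : R, 0 < c /\ forall n, c <= avg_absM J beta (Gs n).
Proof.
move=> _ adj_sym _ _ _ _ [Jmax J_bounds] J_gt0 [Jmin [Jmin_gt0 Jmin_le]] Gs_neq0 _ _
  Gs_connected mu_finite [A [A_gt0 [bbar mu_exp]]].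
have J_ge0 i j : 0 <= J i j := (J_bounds i j).1.
have J_nonadj i j : ~~ adj i j -> J i j = 0.
  by move=> nij; apply/eqP; rewrite eq_le J_ge0 andbT leNgt J_gt0.
have [K [K_ge1 mu_le]] : exists K : R, 1 <= K /\
    forall (t : {n & Gs n}) b, (mu_p adj (tagged t) b)%:R <= K * (A + 1) ^+ b.
  apply: (uniform_exp_bound (bbar := bbar) A_gt0) => [b | b hb t].
    by have [M hM] := mu_finite b; exists M => t; apply: hM.
  exact: mu_exp b hb (tag t) (tagged t).
set B := A + 1; have B_gt0 : 0 < B by rewrite /B; lra.
exists (8 * K * B / Jmin) => beta; rewrite ltr_pdivrMr // => beta_gt.
set x := expR (- (beta * Jmin)); have x_gt0 : 0 < x by apply: expR_gt0.
have beta_gt0 : 0 < beta.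
  by rewrite -(pmulr_lgt0 _ Jmin_gt0); apply: lt_trans beta_gt; rewrite !mulr_gt0 //; lra.
have KBx_le : 8 * K * B * x <= 1 := mul_expRN_le1 (ltW beta_gt).
have Bx_le : B * x <= 2^-1.
  have : 0 <= (K - 1) * (B * x).
    by apply: mulr_ge0; [rewrite subr_ge0 | apply: mulr_ge0; apply: ltW].
  nra.
exists 2^-1; split=> [|n]; first by lra.
apply: le_trans (avg_absM_ge adj_sym J_nonadj J_ge0 Jmin_le (Gs_connected n) (Gs_neq0 n)
  (ltW beta_gt0) (fun p => inside_part_sum_le (Gs_connected n) (le_trans ler01 K_ge1)
     (ltW B_gt0) (ltW x_gt0) Bx_le (mu_le (Tagged (fun m => Gs m) p)))).
lra.
Qed.
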